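(* Let $P$ be a continuous poset and $M$ a persistence module over $P$. The following are equivalent: (i) $M$ is ephemeral; (ii) $\overline M=0$; (iii) $\underline M=0$.
   Context: Let $P$ be a poset. A subset is directed if nonempty and any two elements have an upper bound in it. $x\ll y$ ($x$ way below $y$) means: for every directed $D$ whose supremum exists with $y\le\sup D$, some $d\in D$ satisfies $x\le d$. $P$ is continuous if for each $p$ the set $\{x:x\ll p\}$ is directed with supremum $p$. $k$ is a commutative ring with unity; a persistence module over $P$ is a functor $M$ from $P$ (as a category) to $k$-modules. Define persistence modules $\underline M_p=\varprojlim_{x\gg p}M_x$ and $\overline M_p=\varinjlim_{x\ll p}M_x$. $M$ is ephemeral if $M(p\le q)=0$ for all $p\ll q$. *)

From HB Require Import structures.
From mathcomp Require Import all_boot all_order all_algebra.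
Set Implicit Arguments. Unset Strict Implicit. Unset Printing Implicit Defensive.
Import Order.Theory GRing.Theory.
Local Open Scope order_scope.

Section Defs.
Context {disp : Order.disp_t} {P : porderType disp}.

Definition directed (D : P -> Prop) : Prop :=
  (exists x, D x) /\
  (forall x y, D x -> D y -> exists z, [/\ D z, x <= z & y <= z]).

Definition is_sup (D : P -> Prop) (s : P) : Prop :=
  (forall d, D d -> d <= s) /\
  (forall u, (forall d, D d -> d <= u) -> s <= u).

Definition way_below (x y : P) : Prop :=
  forall (D : P -> Prop) (s : P), directed D -> is_sup D s -> y <= s ->
    exists d, D d /\ x <= d.

Definition continuous_poset : Prop :=
  forall p : P, directed (fun x => way_below x p) /\
                is_sup (fun x => way_below x p) p.
End Defs.

Record pmodule {disp : Order.disp_t} (P : porderType disp) (k : comPzRingType) := PModule {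
  pm_obj :> P -> lmodType k;
  pm_map : forall p q : P, p <= q -> {linear pm_obj p -> pm_obj q};
  pm_id : forall (p : P) (h : p <= p) (m : pm_obj p), pm_map h m = m;
  pm_comp : forall (p q r : P) (h1 : p <= q) (h2 : q <= r) (h3 : p <= r)
              (m : pm_obj p), pm_map h3 m = pm_map h2 (pm_map h1 m)
}.

Section Limits.
Context {disp : Order.disp_t} {P : porderType disp} {k : comPzRingType}.
Variable M : pmodule P k.

Definition trivial_mod (L : lmodType k) : Prop := forall l : L, l = 0%R.

Definition is_cocone (I : P -> Prop) (N : lmodType k)
    (leg : forall x : P, {linear M x -> N}) : Prop :=
  forall x y (h : x <= y), I x -> I y ->
    forall m : M x, leg y (pm_map M h m) = leg x m.

Definition is_colimit (I : P -> Prop) (L : lmodType k)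
    (leg : forall x : P, {linear M x -> L}) : Prop :=
  is_cocone I leg /\
  forall (N : lmodType k) (leg' : forall x : P, {linear M x -> N}),
    is_cocone I leg' ->
    exists u : {linear L -> N},
      (forall x, I x -> forall m : M x, u (leg x m) = leg' x m) /\
      (forall v : {linear L -> N},
         (forall x, I x -> forall m : M x, v (leg x m) = leg' x m) ->
         forall l, v l = u l).

Definition is_cone (I : P -> Prop) (N : lmodType k)
    (leg : forall x : P, {linear N -> M x}) : Prop :=
  forall x y (h : x <= y), I x -> I y ->
    forall n : N, pm_map M h (leg x n) = leg y n.

Definition is_limit (I : P -> Prop) (L : lmodType k)
    (leg : forall x : P, {linear L -> M x}) : Prop :=
  is_cone I leg /\
  forall (N : lmodType k) (leg' : forall x : P, {linear N -> M x}),
    is_cone I leg' ->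
    exists u : {linear N -> L},
      (forall x, I x -> forall n : N, leg x (u n) = leg' x n) /\
      (forall v : {linear N -> L},
         (forall x, I x -> forall n : N, leg x (v n) = leg' x n) ->
         forall n, v n = u n).

(** \overline M_p = colim_{x << p} M_x is the zero module. *)
Definition overline_zero_at (p : P) : Prop :=
  exists (L : lmodType k) (leg : forall x : P, {linear M x -> L}),
    is_colimit (fun x => way_below x p) leg /\ trivial_mod L.

(** \underline M_p = lim_{x >> p} M_x is the zero module. *)
Definition underline_zero_at (p : P) : Prop :=
  exists (L : lmodType k) (leg : forall x : P, {linear L -> M x}),
    is_limit (fun x => way_below p x) leg /\ trivial_mod L.

Definition overline_zero : Prop := forall p, overline_zero_at p.
Definition underline_zero : Prop := forall p, underline_zero_at p.

Definition ephemeral : Prop :=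
  forall (p q : P) (h : p <= q), way_below p q ->
    forall m : M p, pm_map M h m = 0%R.
End Limits.

From mathcomp Require Import all_boot all_order all_algebra.
Import Order.Theory GRing.Theory.
Set Implicit Arguments. Unset Strict Implicit.

(* In a continuous poset the way-below relation interpolates: [x << z] gives
   [x << y << z] for some [y].  Hence, if [M] is ephemeral, every [M x] with
   [x << p] dies in some later [M y] with [y << p], so the zero module is the
   colimit over [{x | x << p}]; dually it is the limit over [{x | p << x}].
   Conversely, if the (co)limit is zero, the maps [M(x <= q)] for [x << q]
   form a cocone over [{x | x << q}] which must factor through zero; dually
   for the cone of maps [M(p <= x)] over [{x | p << x}]. *)

Local Open Scope order_scope.

Section WayBelow.
Context {disp : Order.disp_t} {P : porderType disp}.

Lemma way_belowW (x y : P) : way_below x y -> x <= y.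
Proof.
move=> xy.
have dir : directed (fun d => d = y) by split=> [|a b -> ->]; exists y.
have sup : is_sup (fun d => d = y) y by split=> [d ->|u]; last apply.
by have [d [-> ->]] := xy _ _ dir sup (le_refl y).
Qed.

Lemma way_below_le_trans (x y z : P) : way_below x y -> y <= z -> way_below x z.
Proof. by move=> xy yz D s dD sD zs; apply: xy dD sD _; exact: le_trans zs. Qed.

Lemma le_way_below_trans (w x y : P) : w <= x -> way_below x y -> way_below w y.
Proof.
move=> wx xy D s dD sD ys; have [d [Dd xd]] := xy D s dD sD ys.
by exists d; split=> //; exact: le_trans xd.
Qed.

Hypothesis P_continuous : continuous_poset (P := P).

Definition interpolants (z : P) (w : P) : Prop :=
  exists y, way_below w y /\ way_below y z.

Lemma interpolants_directed (z : P) : directed (interpolants z).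
Proof.
have [[[y yz] dir_z] _] := P_continuous z.
split; first by have [[[w wy] _] _] := P_continuous y; exists w, y.
move=> w1 w2 [y1 [w1y1 y1z]] [y2 [w2y2 y2z]].
have [y3 [y3z y13 y23]] := dir_z y1 y2 y1z y2z.
have [[_ dir_y3] _] := P_continuous y3.
have [w3 [w3y3 w13 w23]] :=
  dir_y3 w1 w2 (way_below_le_trans w1y1 y13) (way_below_le_trans w2y2 y23).
by exists w3; split=> //; exists y3.
Qed.

Lemma interpolants_sup (z : P) : is_sup (interpolants z) z.
Proof.
split=> [w [y [wy yz]]|u ub]; first exact: le_trans (way_belowW wy) (way_belowW yz).
have [_ [_ sup_z]] := P_continuous z; apply: sup_z => y yz.
have [_ [_ sup_y]] := P_continuous y; apply: sup_y => w wy.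
by apply: ub; exists y.
Qed.

Lemma way_below_interpolate (x z : P) :
  way_below x z -> exists y, way_below x y /\ way_below y z.
Proof.
move=> xz.
have [w [[y [wy yz]] xw]] :=
  xz _ _ (interpolants_directed z) (interpolants_sup z) (le_refl z).
by exists y; split=> //; exact: le_way_below_trans xw wy.
Qed.

End WayBelow.

Lemma trivial_mod_rV0 (k : comPzRingType) : trivial_mod 'rV[k]_0.
Proof. by move=> l; apply/matrixP => i []. Qed.

Section PersistenceModule.
Context {disp : Order.disp_t} {P : porderType disp} {k : comPzRingType}.
Variable M : pmodule P k.

(* The structure maps into [M q] and out of [M p], extended by zero where
   they are undefined, so that they can serve as cocone and cone legs. *)
Definition pm_map_to (q x : P) : {linear M x -> M q} :=
  match sumbool_of_bool (x <= q) with
  | left h => pm_map M h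
  | right _ => \0%R
  end.

Definition pm_map_from (p x : P) : {linear M p -> M x} :=
  match sumbool_of_bool (p <= x) with
  | left h => pm_map M h
  | right _ => \0%R
  end.

Lemma pm_map_toE q x (h : x <= q) m : pm_map_to q x m = pm_map M h m.
Proof.
rewrite /pm_map_to; case: sumbool_of_bool => h'; last by rewrite h in h'.
by rewrite (bool_irrelevance h' h).
Qed.

Lemma pm_map_fromE p x (h : p <= x) m : pm_map_from p x m = pm_map M h m.
Proof.
rewrite /pm_map_from; case: sumbool_of_bool => h'; last by rewrite h in h'.
by rewrite (bool_irrelevance h' h).
Qed.

Lemma is_cocone_pm_map_to (I : P -> Prop) (q : P) :
  (forall x, I x -> x <= q) -> is_cocone I (pm_map_to q).
Proof.
move=> Iq x y h Ix Iy m.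
by rewrite (pm_map_toE (Iq y Iy)) (pm_map_toE (Iq x Ix)) (pm_comp h (Iq y Iy)).
Qed.

Lemma is_cone_pm_map_from (I : P -> Prop) (p : P) :
  (forall x, I x -> p <= x) -> is_cone I (pm_map_from p).
Proof.
move=> pI x y h Ix Iy m.
by rewrite (pm_map_fromE (pI y Iy)) (pm_map_fromE (pI x Ix)) (pm_comp (pI x Ix) h).
Qed.

Lemma trivial_colimit_pm_map_eq0 (I : P -> Prop) (q : P) (L : lmodType k)
    (leg : forall x : P, {linear M x -> L}) :
  is_colimit I leg -> trivial_mod L -> (forall x, I x -> x <= q) ->
  forall x (h : x <= q), I x -> forall m : M x, pm_map M h m = 0%R.
Proof.
move=> [_ univ] L0 Iq x h Ix m.
have [u [u_leg _]] := univ _ _ (is_cocone_pm_map_to Iq).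
by rewrite -(pm_map_toE h) -(u_leg x Ix m) (L0 (leg x m)) linear0.
Qed.

Lemma trivial_limit_pm_map_eq0 (I : P -> Prop) (p : P) (L : lmodType k)
    (leg : forall x : P, {linear L -> M x}) :
  is_limit I leg -> trivial_mod L -> (forall x, I x -> p <= x) ->
  forall x (h : p <= x), I x -> forall m : M p, pm_map M h m = 0%R.
Proof.
move=> [_ univ] L0 pI x h Ix m.
have [u [u_leg _]] := univ _ _ (is_cone_pm_map_from pI).
by rewrite -(pm_map_fromE h) -(u_leg x Ix m) (L0 (u m)) linear0.
Qed.

Lemma is_colimit_zero (I : P -> Prop) :
  (forall x, I x -> exists y (h : x <= y), I y /\ forall m, pm_map M h m = 0%R) ->
  is_colimit I (fun x => \0%R : {linear M x -> 'rV[k]_0}).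
Proof.
move=> dies; split=> [x y h _ _ m //|N leg' cc].
exists \0%R; split=> [x Ix m|v _ l]; last by rewrite (trivial_mod_rV0 l) linear0.
have [y [h [Iy h0]]] := dies x Ix.
by rewrite /= -(cc x y h Ix Iy m) h0 linear0.
Qed.

Lemma is_limit_zero (I : P -> Prop) :
  (forall x, I x -> exists y (h : y <= x), I y /\ forall m, pm_map M h m = 0%R) ->
  is_limit I (fun x => \0%R : {linear 'rV[k]_0 -> M x}).
Proof.
move=> dies; split=> [x y h _ _ n /=|N leg' cc]; first by rewrite linear0.
exists \0%R; split=> [x Ix n|v _ n]; last by rewrite (trivial_mod_rV0 (v n)).
have [y [h [Iy h0]]] := dies x Ix.
by rewrite /= -(cc y x h Iy Ix n) h0.
Qed.

Lemma overline_zero_ephemeral : overline_zero M -> ephemeral M.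
Proof.
move=> M0 p q h pq; have [L [leg [colim L0]]] := M0 q.
exact: trivial_colimit_pm_map_eq0 colim L0 (fun x => @way_belowW _ _ x q) _ h pq.
Qed.

Lemma underline_zero_ephemeral : underline_zero M -> ephemeral M.
Proof.
move=> M0 p q h pq; have [L [leg [lim L0]]] := M0 p.
exact: trivial_limit_pm_map_eq0 lim L0 (@way_belowW _ _ p) _ h pq.
Qed.

Hypothesis P_continuous : continuous_poset (P := P).

Lemma ephemeral_overline_zero : ephemeral M -> overline_zero M.
Proof.
move=> eph p; exists 'rV[k]_0, (fun x => \0%R); split; last exact: trivial_mod_rV0.
apply: is_colimit_zero => x xp.
have [y [xy yp]] := way_below_interpolate P_continuous xp.
by exists y, (way_belowW xy); split=> // m; apply: eph.
Qed.

Lemma ephemeral_underline_zero : ephemeral M -> underline_zero M.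
Proof.
move=> eph p; exists 'rV[k]_0, (fun x => \0%R); split; last exact: trivial_mod_rV0.
apply: is_limit_zero => x px.
have [y [py yx]] := way_below_interpolate P_continuous px.
by exists y, (way_belowW yx); split=> // m; apply: eph.
Qed.

End PersistenceModule.

Theorem mainTheorem6 (disp : Order.disp_t) (P : porderType disp)
  (k : comPzRingType) (M : pmodule P k) :
  continuous_poset (P := P) ->
  (ephemeral M <-> overline_zero M) /\ (overline_zero M <-> underline_zero M).
Proof.
move=> C; split; split.
- exact: ephemeral_overline_zero.
- exact: overline_zero_ephemeral.
- by move=> /overline_zero_ephemeral; exact: ephemeral_underline_zero.
- by move=> /underline_zero_ephemeral; exact: ephemeral_overline_zero.
Qed.
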